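(* Let $F$, $H$, $X$, $\Omega$, $Q$ and the sequences generated by the IneIREG method be as described in the context, suppose $H$ is $\mu$-strongly monotone for some $\mu>0$, and suppose $0<\lambda_k<1/L_k$ for all $k\ge0$, where $L_k:=L_F+\eta_kL_H$. Let $\beta_k:=\big(\frac{1}{1-\lambda_k^2L_k^2}+\frac{1}{2\lambda_k\eta_k\mu}\big)^{-1}$. Then for all $x\in X$ and $k\ge0$, $$(1-\beta_k)\|w_k-x\|^2-\|x_{k+1}-x\|^2\ge2\lambda_k\langle F(x),y_k-x\rangle+2\lambda_k\eta_k\langle H(x),y_k-x\rangle.$$
   Context: Work in $\mathbb{R}^n$ with Euclidean inner product $\langle\cdot,\cdot\rangle$ and norm $\|\cdot\|$. The maps $F\colon \mathrm{Dom}\,F\to\mathbb{R}^n$ and $H\colon\mathrm{Dom}\,H\to\mathbb{R}^n$ are monotone and Lipschitz continuous with constants $L_F>0$ and $L_H>0$; $H$ is $\mu$-strongly monotone means $\langle H(x)-H(y),x-y\rangle\ge\mu\|x-y\|^2$ for all $x,y\in\mathrm{Dom}\,H$. $X$ is a nonempty compact convex set and $\Omega$ a nonempty closed convex set with $X\subset\Omega\subset\mathrm{Dom}\,F\cap\mathrm{Dom}\,H$; $P_X,P_\Omega$ denote orthogonal projections. $Q:=\{x\in X:\langle F(x),y-x\rangle\ge0\ \forall y\in X\}$ is assumed nonempty. IneIREG method: start with $x_0=x_{-1}\in X$; for $k=0,1,\dots$, with parameters $\alpha_k\ge0$, $\lambda_k>0$, $\eta_k>0$, set $w_k=x_k+\alpha_k(x_k-x_{k-1})$,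 $w'_k=P_\Omega(w_k)$, $y_k=P_X\big(w_k-\lambda_k(F(w'_k)+\eta_kH(w'_k))\big)$, $x_{k+1}=P_X\big(w_k-\lambda_k(F(y_k)+\eta_kH(y_k))\big)$. *)

From HB Require Import structures.
From mathcomp Require Import all_boot all_order all_algebra.
From mathcomp Require Import all_classical all_reals all_analysis.
Set Implicit Arguments. Unset Strict Implicit. Unset Printing Implicit Defensive.
Import Order.TTheory GRing.Theory Num.Theory.
Local Open Scope ring_scope.
Local Open Scope classical_set_scope.

Section Defs.
Variables (R : realType) (n : nat).
Notation V := 'rV[R]_n.

Definition dotp (u v : V) : R := \sum_(i < n) u ord0 i * v ord0 i.
Definition enorm (u : V) : R := Num.sqrt (dotp u u).

Definition vconvex_set (C : set V) : Prop :=
  forall x y, C x -> C y -> forall t : R, 0 <= t -> t <= 1 ->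
    C (t *: x + (1 - t) *: y).

Definition is_projection (C : set V) (x p : V) : Prop :=
  C p /\ forall y, C y -> enorm (x - p) <= enorm (x - y).

Definition vmonotone_on (D : set V) (F : V -> V) : Prop :=
  forall x y, D x -> D y -> 0 <= dotp (F x - F y) (x - y).

Definition vstrongly_monotone_on (D : set V) (F : V -> V) (mu : R) : Prop :=
  forall x y, D x -> D y -> mu * enorm (x - y) ^+ 2 <= dotp (F x - F y) (x - y).

Definition vlipschitz_on (D : set V) (F : V -> V) (L : R) : Prop :=
  forall x y, D x -> D y -> enorm (F x - F y) <= L * enorm (x - y).

Definition VIsol (X : set V) (F : V -> V) : set V :=
  [set x | X x /\ forall y, X y -> 0 <= dotp (F x) (y - x)].

(* x_{k-1}, with the convention x_{-1} = x_0 *)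
Definition prev_iter (x : nat -> V) (k : nat) : V :=
  if k is k'.+1 then x k' else x 0%N.

End Defs.

(* Write G := F + eta_k H and L_k := L_F + eta_k L_H, a Lipschitz constant of G.
   The variational characterisation of the projection onto X, applied to the two
   projections defining y_k and x_{k+1}, gives the extragradient estimate
     |x_{k+1} - x|^2 <= |w_k - x|^2 - (1 - lambda_k^2 L_k^2) |w_k - y_k|^2
                        - 2 lambda_k <G y_k, y_k - x>,
   where the Lipschitz bound for G is used between y_k and w'_k = P_Omega(w_k),
   which is no farther from y_k \in Omega than w_k is.  Monotonicity of F and
   strong monotonicity of H bound <G y_k, y_k - x> from below by
   <F x + eta_k H x, y_k - x> + eta_k mu |y_k - x|^2, and the weighted inequality
   a |u|^2 + b |v|^2 >= (1/a + 1/b)^-1 |u + v|^2 with u = w_k - y_k, v = y_k - x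
   absorbs the two remaining squares into beta_k |w_k - x|^2. *)
From HB Require Import structures.
From mathcomp Require Import all_boot all_order all_algebra.
From mathcomp Require Import all_classical all_reals all_analysis.
From mathcomp Require Import ring lra.
Import Order.TTheory GRing.Theory Num.Theory.
Import numFieldTopology.Exports numFieldNormedType.Exports.
Set Implicit Arguments.
Unset Strict Implicit.
Local Open Scope ring_scope.
Local Open Scope classical_set_scope.

Section Euclidean.
Variables (R : realType) (n : nat).
Notation V := 'rV[R]_n.
Implicit Types (u v t d : V) (a b c p q : R).

Lemma dotpC u v : dotp u v = dotp v u.
Proof. by apply: eq_bigr => i _; rewrite mulrC. Qed.

Lemma dotpDl u v t : dotp (u + v) t = dotp u t + dotp v t.
Proof. by rewrite /dotp -big_split; apply: eq_bigr => i _; rewrite mxE mulrDl. Qed.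

Lemma dotpZl a u t : dotp (a *: u) t = a * dotp u t.
Proof. by rewrite /dotp mulr_sumr; apply: eq_bigr => i _; rewrite mxE mulrA. Qed.

Lemma dotpNl u t : dotp (- u) t = - dotp u t.
Proof. by rewrite -scaleN1r dotpZl mulN1r. Qed.

Lemma dotpBl u v t : dotp (u - v) t = dotp u t - dotp v t.
Proof. by rewrite dotpDl dotpNl. Qed.

Lemma dotpDr u v t : dotp t (u + v) = dotp t u + dotp t v.
Proof. by rewrite dotpC dotpDl !(dotpC t). Qed.

Lemma dotpZr a u t : dotp t (a *: u) = a * dotp t u.
Proof. by rewrite dotpC dotpZl dotpC. Qed.

Lemma dotpNr u t : dotp t (- u) = - dotp t u.
Proof. by rewrite dotpC dotpNl dotpC. Qed.

Lemma dotpBr u v t : dotp t (u - v) = dotp t u - dotp t v.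
Proof. by rewrite dotpDr dotpNr. Qed.

Lemma dotpp_ge0 u : 0 <= dotp u u.
Proof. by apply: sumr_ge0 => i _; rewrite -expr2 sqr_ge0. Qed.

Lemma enorm_ge0 u : 0 <= enorm u.
Proof. exact: sqrtr_ge0. Qed.

Lemma sqr_enorm u : enorm u ^+ 2 = dotp u u.
Proof. by rewrite /enorm sqr_sqrtr // dotpp_ge0. Qed.

Lemma enormZ a u : enorm (a *: u) = `|a| * enorm u.
Proof. by rewrite /enorm dotpZl dotpZr mulrA -expr2 sqrtrM ?sqr_ge0 // sqrtr_sqr. Qed.

Lemma sqr_enormZ a u : enorm (a *: u) ^+ 2 = a ^+ 2 * enorm u ^+ 2.
Proof. by rewrite !sqr_enorm dotpZl dotpZr mulrA -expr2. Qed.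

Lemma enormN u : enorm (- u) = enorm u.
Proof. by rewrite /enorm dotpNl dotpNr opprK. Qed.

Lemma enorm_distC u v : enorm (u - v) = enorm (v - u).
Proof. by rewrite -opprB enormN. Qed.

Lemma sqr_enormD u v :
  enorm (u + v) ^+ 2 = enorm u ^+ 2 + 2 * dotp u v + enorm v ^+ 2.
Proof. by rewrite !sqr_enorm dotpDl !dotpDr (dotpC v u); ring. Qed.

Lemma sqr_enormB u v :
  enorm (u - v) ^+ 2 = enorm u ^+ 2 - 2 * dotp u v + enorm v ^+ 2.
Proof. by rewrite sqr_enormD dotpNr enormN; ring. Qed.

Lemma dotp_young c u v : 0 < c ->
  2 * dotp u v <= c * enorm u ^+ 2 + c^-1 * enorm v ^+ 2.
Proof.
move=> c_gt0; have := dotpp_ge0 (c *: u - v).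
rewrite -sqr_enorm sqr_enormB sqr_enormZ dotpZl => ge0.
rewrite -(ler_pM2l c_gt0) mulrDr mulrA (mulrA c c^-1) divff ?gt_eqF // mul1r.
by rewrite expr2 in ge0; lra.
Qed.

Lemma sqr_enormD_le c u v : 0 < c ->
  enorm (u + v) ^+ 2 <= (1 + c) * enorm u ^+ 2 + (1 + c^-1) * enorm v ^+ 2.
Proof. by move=> /(dotp_young u v); rewrite sqr_enormD; lra. Qed.

Lemma sqr_enormD_harmonic a b u v : 0 < a -> 0 < b ->
  (a^-1 + b^-1)^-1 * enorm (u + v) ^+ 2 <= a * enorm u ^+ 2 + b * enorm v ^+ 2.
Proof.
move=> a_gt0 b_gt0.
have h_ge0 : 0 <= (a^-1 + b^-1)^-1 by rewrite invr_ge0 addr_ge0 // invr_ge0 ltW.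
apply: le_trans (ler_wpM2l h_ge0 (sqr_enormD_le u v (divr_gt0 a_gt0 b_gt0))) _.
rewrite invf_div le_eqVlt; apply/predU1l.
by field; rewrite !gt_eqF // addr_gt0 // invr_gt0.
Qed.

Lemma sqr_enormD_le_sum p q u v d : 0 < p -> 0 < q ->
  enorm u <= p * enorm d -> enorm v <= q * enorm d ->
  enorm (u + v) ^+ 2 <= ((p + q) * enorm d) ^+ 2.
Proof.
move=> p_gt0 q_gt0 hu hv.
have sqr_le (x y : R) : 0 <= x -> x <= y -> x ^+ 2 <= y ^+ 2.
  by move=> x_ge0 xy; rewrite ler_pXn2r // nnegrE (le_trans x_ge0 xy).
have {}hu := sqr_le _ _ (enorm_ge0 u) hu; have {}hv := sqr_le _ _ (enorm_ge0 v) hv.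
apply: le_trans (sqr_enormD_le u v (divr_gt0 q_gt0 p_gt0)) _.
have cq_ge0 : 0 <= 1 + q / p by rewrite addr_ge0 // divr_ge0 // ltW.
have cp_ge0 : 0 <= 1 + (q / p)^-1 by rewrite addr_ge0 // invr_ge0 divr_ge0 // ltW.
apply: le_trans (lerD (ler_wpM2l cq_ge0 hu) (ler_wpM2l cp_ge0 hv)) _.
rewrite le_eqVlt; apply/predU1l.
by field; rewrite !gt_eqF.
Qed.

Lemma vlipschitz_on_addZ (DF DH : set V) (F H : V -> V) LF LH e u v :
  vlipschitz_on DF F LF -> vlipschitz_on DH H LH ->
  0 < LF -> 0 < LH -> 0 < e -> DF u -> DF v -> DH u -> DH v ->
  enorm ((F u + e *: H u) - (F v + e *: H v)) ^+ 2
    <= ((LF + e * LH) * enorm (u - v)) ^+ 2.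
Proof.
move=> lipF lipH LF_gt0 LH_gt0 e_gt0 DFu DFv DHu DHv.
have -> : (F u + e *: H u) - (F v + e *: H v) = (F u - F v) + e *: (H u - H v).
  by rewrite scalerBr opprD addrACA.
apply: sqr_enormD_le_sum; rewrite ?mulr_gt0 //; first exact: lipF.
by rewrite enormZ gtr0_norm // -mulrA ler_pM2l //; exact: lipH.
Qed.

Lemma projection_obtuse (C : set V) (u p v : V) :
  vconvex_set C -> is_projection C u p -> C v -> dotp (u - p) (v - p) <= 0.
Proof.
move=> convC [Cp p_min] Cv; rewrite leNgt; apply/negP => c_gt0.
set c := dotp (u - p) (v - p) in c_gt0.
set s := enorm (v - p) ^+ 2; have s_ge0 : 0 <= s by exact: sqr_ge0.
have cs_gt0 : 0 < c + s by lra.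
(* Moving from p towards v by the step t = c / (c + s) would get strictly closer to u. *)
set t := c / (c + s).
have t_gt0 : 0 < t by rewrite divr_gt0.
have t_le1 : t <= 1 by rewrite ler_pdivrMr // mul1r; lra.
have ct : t * (c + s) = c by rewrite mulfVK // gt_eqF.
have := p_min _ (convC v p Cv Cp t (ltW t_gt0) t_le1).
have -> : u - (t *: v + (1 - t) *: p) = (u - p) - t *: (v - p).
  by apply/rowP => i; rewrite !mxE; ring.
move=> le_norm; have : enorm (u - p) ^+ 2 <= enorm (u - p - t *: (v - p)) ^+ 2.
  by rewrite ler_pXn2r ?nnegrE ?enorm_ge0.
rewrite (sqr_enormB (u - p)) dotpZr sqr_enormZ -/c -/s => le_step.
have : 2 * c <= t * s by rewrite -(ler_pM2l t_gt0); rewrite expr2 in le_step; lra.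
have : t * s <= c by rewrite -ct ler_pM2l //; lra.
lra.
Qed.

Lemma projection_three_point (C : set V) (u p w v : V) :
  vconvex_set C -> is_projection C u p -> C v ->
  enorm (w - p) ^+ 2 + enorm (p - v) ^+ 2 + 2 * dotp (w - u) (p - v)
    <= enorm (w - v) ^+ 2.
Proof.
move=> convC proj_p Cv; have := projection_obtuse convC proj_p Cv.
have -> : u - p = (w - p) - (w - u) by rewrite opprB [RHS]addrC subrKA.
rewrite -(opprB p v) dotpNr dotpBl => obtuse.
by rewrite -(subrKA p w (- v)) (sqr_enormD (w - p)); lra.
Qed.

Lemma projection_sqr_enorm_le (C : set V) (u p v : V) :
  vconvex_set C -> is_projection C u p -> C v ->
  enorm (p - v) ^+ 2 <= enorm (u - v) ^+ 2.
Proof.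
move=> convC proj_p Cv; have := projection_three_point u convC proj_p Cv.
rewrite subrr -(scale0r (0 : V)) dotpZl mul0r mulr0 addr0.
by have := sqr_ge0 (enorm (u - p)); lra.
Qed.

Lemma extragradient_descent (C : set V) (G : V -> V) L s w w' y x z :
  vconvex_set C ->
  is_projection C (w - s *: G w') y -> is_projection C (w - s *: G y) x ->
  enorm (G y - G w') ^+ 2 <= (L * enorm (w - y)) ^+ 2 -> C z ->
  enorm (x - z) ^+ 2 <= enorm (w - z) ^+ 2
    - (1 - (s * L) ^+ 2) * enorm (w - y) ^+ 2 - 2 * s * dotp (G y) (y - z).
Proof.
move=> convC proj_y proj_x lipG Cz.
have Cx : C x by case: proj_x.
have at_x := projection_three_point w convC proj_x Cz.
have at_y := projection_three_point w convC proj_y Cx.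
rewrite subKr dotpZl in at_x; rewrite subKr dotpZl in at_y.
have split_x : dotp (G y) (x - z) = dotp (G y) (y - z) - dotp (G y) (y - x).
  by rewrite -dotpBr opprB (addrC (y - z)) subrKA.
have young := dotp_young (s *: (G y - G w')) (y - x) ltr01.
rewrite invr1 !mul1r sqr_enormZ dotpZl dotpBl in young.
have : s ^+ 2 * enorm (G y - G w') ^+ 2 <= (s * L) ^+ 2 * enorm (w - y) ^+ 2.
  by rewrite exprMn -(mulrA (s ^+ 2)) ler_wpM2l ?sqr_ge0 // -exprMn.
by rewrite split_x in at_x; lra.
Qed.

Lemma monotone_addZ_lower_bound (DF DH : set V) (F H : V -> V) mu e u z :
  vmonotone_on DF F -> vstrongly_monotone_on DH H mu -> 0 <= e ->
  DF u -> DF z -> DH u -> DH z ->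
  dotp (F z) (u - z) + e * dotp (H z) (u - z) + e * mu * enorm (u - z) ^+ 2
    <= dotp (F u + e *: H u) (u - z).
Proof.
move=> monF smonH e_ge0 DFu DFz DHu DHz.
have := monF _ _ DFu DFz; have := smonH _ _ DHu DHz.
rewrite !dotpBl dotpDl dotpZl -mulrA => smon mon.
by have := ler_wpM2l e_ge0 smon; lra.
Qed.

End Euclidean.

Theorem corollary4p5 (R : realType) (n : nat)
  (DomF DomH X Omega : set 'rV[R]_n) (F H : 'rV[R]_n -> 'rV[R]_n)
  (LF LH mu : R) (PX POm : 'rV[R]_n -> 'rV[R]_n)
  (alpha lambda eta : nat -> R) (x w w' y : nat -> 'rV[R]_n) :
  0 < LF -> 0 < LH ->
  vmonotone_on DomF F -> vlipschitz_on DomF F LF ->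
  vmonotone_on DomH H -> vlipschitz_on DomH H LH ->
  0 < mu -> vstrongly_monotone_on DomH H mu ->
  X !=set0 -> compact X -> vconvex_set X ->
  Omega !=set0 -> closed Omega -> vconvex_set Omega ->
  X `<=` Omega -> Omega `<=` DomF `&` DomH ->
  VIsol X F !=set0 ->
  (forall z, is_projection X z (PX z)) ->
  (forall z, is_projection Omega z (POm z)) ->
  (forall k, 0 <= alpha k) -> (forall k, 0 < lambda k) -> (forall k, 0 < eta k) ->
  (forall k, lambda k < 1 / (LF + eta k * LH)) ->
  X (x 0%N) ->
  (forall k, w k = x k + alpha k *: (x k - prev_iter x k)) ->
  (forall k, w' k = POm (w k)) ->
  (forall k, y k = PX (w k - lambda k *: (F (w' k) + eta k *: H (w' k)))) ->
  (forall k, x k.+1 = PX (w k - lambda k *: (F (y k) + eta k *: H (y k)))) ->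
  forall (z : 'rV[R]_n) (k : nat), X z ->
    let Lk := LF + eta k * LH in
    let betak := (1 / (1 - lambda k ^+ 2 * Lk ^+ 2)
                  + 1 / (2 * lambda k * eta k * mu))^-1 in
    (1 - betak) * enorm (w k - z) ^+ 2 - enorm (x k.+1 - z) ^+ 2
      >= 2 * lambda k * dotp (F z) (y k - z)
         + 2 * lambda k * eta k * dotp (H z) (y k - z).
Proof.
move=> LF_gt0 LH_gt0 monF lipF _ lipH mu_gt0 smonH _ _ convX _ _ convO sXO sOD _
  projX projO _ lam_gt0 eta_gt0 lamL _ _ def_w' def_y def_x z k Xz /=.
set Lk := LF + eta k * LH; set betak := (_ + _)^-1.
have Lk_gt0 : 0 < Lk by rewrite addr_gt0 // mulr_gt0.
have proj_y := projX (w k - lambda k *: (F (w' k) + eta k *: H (w' k))).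
have proj_x := projX (w k - lambda k *: (F (y k) + eta k *: H (y k))).
rewrite -def_y in proj_y; rewrite -def_x in proj_x.
have Xy : X (y k) by case: proj_y.
have Ow' : Omega (w' k) by rewrite def_w'; case: (projO (w k)).
have [[DFy DHy] [DFz DHz]] := (sOD _ (sXO _ Xy), sOD _ (sXO _ Xz)).
have [DFw' DHw'] := sOD _ Ow'.
have lipG : enorm ((F (y k) + eta k *: H (y k)) - (F (w' k) + eta k *: H (w' k))) ^+ 2
    <= (Lk * enorm (w k - y k)) ^+ 2.
  apply: le_trans
    (vlipschitz_on_addZ lipF lipH LF_gt0 LH_gt0 (eta_gt0 k) DFy DFw' DHy DHw') _.
  rewrite !exprMn ler_wpM2l ?sqr_ge0 // enorm_distC def_w'.
  exact: projection_sqr_enorm_le convO (projO _) (sXO _ Xy).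
have descent := extragradient_descent (G := fun v => F v + eta k *: H v)
  convX proj_y proj_x lipG Xz.
have mono := monotone_addZ_lower_bound monF smonH (ltW (eta_gt0 k)) DFy DFz DHy DHz.
have lamLk : 0 < 1 - lambda k ^+ 2 * Lk ^+ 2.
  by rewrite subr_gt0 -exprMn expr_lt1 ?mulr_ge0 ?ltW // -ltr_pdivlMr.
have b_gt0 : 0 < 2 * lambda k * eta k * mu by rewrite !mulr_gt0.
have harmonic : betak * enorm (w k - z) ^+ 2 <= (1 - lambda k ^+ 2 * Lk ^+ 2)
    * enorm (w k - y k) ^+ 2 + 2 * lambda k * eta k * mu * enorm (y k - z) ^+ 2.
  by rewrite /betak !div1r -(subrKA (y k) (w k) (- z)); exact: sqr_enormD_harmonic.
have := ler_wpM2l (ltW (lam_gt0 k)) mono.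
by rewrite exprMn in descent; lra.
Qed.
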